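(* Let $H$ be a planar graph that is minimal $Q$-triconnected for a set $Q\subseteq V(H)$ of terminals, and let $T$ be a terminal-bounded tree of $H$. A vertex of $T$ is a terminal if and only if it is a leaf of $T$.
   Context: Two vertices are triconnected if there are three internally vertex-disjoint paths between them. $H$ is $Q$-triconnected if every pair of vertices of $Q$ is triconnected; it is minimal if deleting any edge or vertex violates this. Vertices of $Q$ are terminals. A subgraph is terminal-free if it is connected and contains no terminal. A terminal-bounded component is either a single edge joining two terminals, or is obtained from a maximal terminal-free subgraph $S$ by adding all edges from $S$ to its neighbours (all of which are terminals); in such $H$ these components are trees, called terminal-bounded trees. *)

From mathcomp Require Import all_boot.
From Stdlib Require Import Reals.

Set Implicit Arguments.
Unset Strict Implicit.
Unset Printing Implicit Defensive.

Section Graphs.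
Variable T : finType.

Definition simple_graph (V : {set T}) (E : {set {set T}}) : Prop :=
  forall f, f \in E -> exists x y, [/\ x != y, x \in V, y \in V & f = [set x; y]].

Definition adj (E : {set {set T}}) (x y : T) : bool := [set x; y] \in E.

Definition gpath (V : {set T}) (E : {set {set T}}) (u v : T) (p : seq T) : Prop :=
  [/\ path (adj E) u p, uniq (u :: p), all (fun x => x \in V) (u :: p)
    & last u p = v].

Definition interior (u : T) (p : seq T) : seq T := behead (belast u p).

Definition int_disjoint (u : T) (p q : seq T) : Prop :=
  forall x, x \in interior u p -> x \notin interior u q.

Definition triconnected (V : {set T}) (E : {set {set T}}) (u v : T) : Prop :=
  exists p1 p2 p3 : seq T,
    [/\ gpath V E u v p1, gpath V E u v p2, gpath V E u v p3,
        [/\ p1 != p2, p1 != p3 & p2 != p3] &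
        [/\ int_disjoint u p1 p2, int_disjoint u p1 p3 & int_disjoint u p2 p3]].

Definition Q_triconnected (V : {set T}) (E : {set {set T}}) (Q : {set T}) : Prop :=
  Q \subset V /\
  forall u v, u \in Q -> v \in Q -> u != v -> triconnected V E u v.

Definition del_vertex_E (E : {set {set T}}) (v : T) : {set {set T}} :=
  [set f in E | v \notin f].

Definition minimal_Q_triconnected (V : {set T}) (E : {set {set T}}) (Q : {set T}) : Prop :=
  [/\ Q_triconnected V E Q,
      (forall f, f \in E -> ~ Q_triconnected V (E :\ f) Q) &
      (forall v, v \in V -> ~ Q_triconnected (V :\ v) (del_vertex_E E v) Q)].

Definition connected_graph (V : {set T}) (E : {set {set T}}) : Prop :=
  forall x y, x \in V -> y \in V -> exists p, gpath V E x y p.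

Definition induced_E (E : {set {set T}}) (S : {set T}) : {set {set T}} :=
  [set f in E | f \subset S].

Definition terminal_free (V : {set T}) (E : {set {set T}}) (Q : {set T})
  (S : {set T}) : Prop :=
  [/\ S != set0, S \subset V :\: Q & connected_graph S (induced_E E S)].

Definition max_terminal_free (V : {set T}) (E : {set {set T}}) (Q : {set T})
  (S : {set T}) : Prop :=
  terminal_free V E Q S /\
  forall S' : {set T}, S \subset S' -> terminal_free V E Q S' -> S' = S.

Definition nbrs (V : {set T}) (E : {set {set T}}) (S : {set T}) : {set T} :=
  [set y in V | [exists x in S, adj E x y]].

Definition terminal_bounded (V : {set T}) (E : {set {set T}}) (Q : {set T})
  (VT : {set T}) (ET : {set {set T}}) : Prop :=
  (exists a b, [/\ a \in Q, b \in Q, a != b, [set a; b] \in E &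
                  VT = [set a; b] /\ ET = [set [set a; b]]])
  \/
  (exists S, [/\ max_terminal_free V E Q S,
                 VT = S :|: nbrs V E S &
                 ET = [set f in E | f :&: S != set0]]).

(* a cycle: at least 3 distinct vertices, consecutive adjacent, closing edge *)
Definition has_cycle (V : {set T}) (E : {set {set T}}) : Prop :=
  exists u p, [/\ 2 <= size p, path (adj E) u p, uniq (u :: p),
                 all (fun x => x \in V) (u :: p) & adj E (last u p) u].

Definition is_tree (V : {set T}) (E : {set {set T}}) : Prop :=
  connected_graph V E /\ ~ has_cycle V E.

Definition degree (E : {set {set T}}) (x : T) : nat := #|[set f in E | x \in f]|.

Definition is_leaf (V : {set T}) (E : {set {set T}}) (x : T) : Prop :=
  x \in V /\ degree E x = 1.

Local Open Scope R_scope.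

Definition in01 (t : R) : Prop := 0 <= t <= 1.

Definition cont_on01 (g : R -> R * R) : Prop :=
  forall t, in01 t -> forall eps, 0 < eps -> exists delta, 0 < delta /\
    forall s, in01 s -> Rabs (s - t) < delta ->
      Rabs (fst (g s) - fst (g t)) < eps /\ Rabs (snd (g s) - snd (g t)) < eps.

Definition planar (V : {set T}) (E : {set {set T}}) : Prop :=
  exists (pos : T -> R * R) (arc : {set T} -> R -> R * R),
    [/\ (forall x y, x \in V -> y \in V -> pos x = pos y -> x = y),
        (forall f, f \in E ->
           [/\ cont_on01 (arc f),
               (forall s t, in01 s -> in01 t -> arc f s = arc f t -> s = t),
               (exists x y, f = [set x; y] /\ arc f 0 = pos x /\ arc f 1 = pos y) &
               (forall t w, 0 < t < 1 -> w \in V -> arc f t <> pos w)]) &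
        (forall f g, f \in E -> g \in E -> f <> g ->
           forall s t, in01 s -> in01 t -> arc f s = arc g t ->
             (s = 0 \/ s = 1) /\ (t = 0 \/ t = 1))].

End Graphs.

From mathcomp Require Import all_boot.

Set Implicit Arguments.
Unset Strict Implicit.
Unset Printing Implicit Defensive.

(* In a component grown from a maximal terminal-free set S, every neighbour
   of S outside S is a terminal (otherwise S could be enlarged), and every
   edge of the component has an end in S.  A terminal adjacent to two
   vertices of the connected set S would close a cycle, so terminals are
   leaves.  Conversely, a non-terminal leaf lies in S, so it has degree 1 in
   the whole graph; no path between two terminals passes through it, and
   deleting it keeps the graph Q-triconnected, against minimality. *)

Section Paths.
Variable T : finType.
Implicit Types (V S : {set T}) (E : {set {set T}}) (x y u v : T) (p : seq T).

Lemma adjC E x y : adj E x y = adj E y x.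
Proof. by rewrite /adj setUC. Qed.

Lemma simple_graph_edge V E f x :
  simple_graph V E -> f \in E -> x \in f -> exists2 y, y != x & f = [set y; x].
Proof.
move=> sg fE; have [a [b [ab _ _ ->]]] := sg f fE.
rewrite !inE => /orP[] /eqP->; first by exists b; rewrite 1?eq_sym // setUC.
by exists a.
Qed.

Lemma gpath_sub V V' E E' u v p :
  V \subset V' -> (forall a b, adj E a b -> adj E' a b) ->
  gpath V E u v p -> gpath V' E' u v p.
Proof.
move=> sVV' sEE' [pp up ap lp]; split=> //; first exact: sub_path pp.
by apply/allP=> z /(allP ap)/(subsetP sVV').
Qed.

Lemma gpath_cons V E y s v p :
  gpath V E s v p -> y \in V -> y \notin s :: p -> adj E y s ->
  gpath V E y v (s :: p).
Proof. by move=> [pp up ap lp] yV yp ys; split; rewrite /= ?ys ?yp ?yV. Qed.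

Lemma gpath_rcons V E u s y p :
  gpath V E u s p -> y \in V -> y \notin u :: p -> adj E s y ->
  gpath V E u y (rcons p y).
Proof.
move=> [pp up ap lp] yV yp sy; split; last by rewrite last_rcons.
- by rewrite rcons_path pp lp.
- by rewrite -rcons_cons rcons_uniq yp.
- by rewrite -rcons_cons all_rcons yV.
Qed.

Lemma gpath_del_vertex V E x u v p :
  gpath V E u v p -> x \notin u :: p ->
  gpath (V :\ x) (del_vertex_E E x) u v p.
Proof.
move=> [pp up ap lp] xp; split=> //.
- elim: p u pp xp {up ap lp} => //= b p IH u /andP[ub pb].
  rewrite !inE !negb_or => /and3P[xu xb xp].
  rewrite IH ?inE ?negb_or ?xb // andbT /adj inE -/(adj E u b) ub.
  by rewrite !inE negb_or xu xb.
- apply/allP=> z zp; rewrite !inE (allP ap z zp) andbT.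
  by apply: contraNneq xp => <-.
Qed.

Lemma gpath_interior_degree V E x u v p :
  gpath V E u v p -> x \in u :: p -> x != u -> x != v -> 1 < degree E x.
Proof.
move=> [pp up _ lp] xp xu xv.
have {}xp : x \in p by move: xp; rewrite inE (negbTE xu).
case/splitPr: xp pp up lp => p1 p2.
case: p2 => [|b p2].
  by rewrite last_cat /= => _ _ ex; rewrite ex eqxx in xv.
rewrite cat_path -cat_cons cat_uniq /= => /and4P[_ ax xb _] /and3P[_ hn ub] _.
set a := last u p1 in ax hn.
have bx : b != x.
  by move: ub; rewrite /= inE negb_or => /andP[/andP[]]; rewrite eq_sym.
have ab : a != b.
  by apply: contraNneq hn => <-; rewrite /a mem_last orbT.
apply/card_gt1P; exists [set a; x], [set x; b].
rewrite !inE -!/(adj E _ _) ax xb !eqxx ?orbT; split=> //.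
apply/eqP=> eab; move: (set22 x b); rewrite -eab !inE.
by rewrite eq_sym (negbTE ab) (negbTE bx).
Qed.

Lemma cycle_of_gpath V E x s s' p :
  gpath V E s s' p -> s != s' -> x \in V -> x \notin s :: p ->
  adj E x s -> adj E s' x -> has_cycle V E.
Proof.
move=> [pp up ap lp] ss' xV xp xs s'x.
exists x, (s :: p); split=> /=; rewrite ?xs ?pp ?xp ?up ?xV ?lp //.
by case: p lp {pp up ap xp} => [/= e|]; first by rewrite e eqxx in ss'.
Qed.

Lemma connected_graph_setU1 E S s y :
  connected_graph S (induced_E E S) -> s \in S -> [set s; y] \in E ->
  connected_graph (y |: S) (induced_E E (y |: S)).
Proof.
move=> cS sS syE.
have [yS|yS] := boolP (y \in S); first by rewrite (setUidPr _) // sub1set.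
have lift a b p : gpath S (induced_E E S) a b p ->
    gpath (y |: S) (induced_E E (y |: S)) a b p /\ y \notin a :: p.
  move=> gp; split.
    apply: gpath_sub gp; first exact: subsetUr.
    move=> c d; rewrite /adj !inE => /andP[-> cdS].
    exact: subset_trans cdS (subsetUr _ _).
  by case: gp => _ _ ap _; apply: contra yS => /(allP ap).
have sy : adj (induced_E E (y |: S)) s y.
  by rewrite /adj inE syE subUset !sub1set !inE eqxx sS orbT.
have yV : y \in y |: S by rewrite setU11.
move=> a b; rewrite !inE => /orP[/eqP->|aS] /orP[/eqP->|bS].
- by exists [::]; split; rewrite //= !inE eqxx.
- have [p /lift[gp yp]] := cS s b sS bS.
  by exists (s :: p); apply: gpath_cons; rewrite // adjC.
- have [p /lift[gp yp]] := cS a s aS sS.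
  by exists (rcons p y); apply: gpath_rcons gp yV yp sy.
- by have [p /lift[gp _]] := cS a b aS bS; exists p.
Qed.

End Paths.

Section Components.
Variable T : finType.
Implicit Types (V S Q : {set T}) (E : {set {set T}}) (x y : T).

Lemma Q_triconnected_del_vertex V E Q x :
  Q_triconnected V E Q -> x \notin Q -> degree E x <= 1 ->
  Q_triconnected (V :\ x) (del_vertex_E E x) Q.
Proof.
move=> [QV tri] xQ dx; split.
  apply/subsetP=> z zQ; rewrite !inE (subsetP QV z zQ) andbT.
  by apply: contraNneq xQ => <-.
move=> u v uQ vQ uv; have [p1 [p2 [p3 [g1 g2 g3 dif dis]]]] := tri u v uQ vQ uv.
have xu : x != u by apply: contraNneq xQ => ->.
have xv : x != v by apply: contraNneq xQ => ->.
have avoid p : gpath V E u v p -> gpath (V :\ x) (del_vertex_E E x) u v p.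
  move=> gp; apply: gpath_del_vertex (gp) _; apply: contraTN dx => xp.
  by rewrite -ltnNge (gpath_interior_degree gp xp xu xv).
by exists p1, p2, p3; split=> //; apply: avoid.
Qed.

Lemma minimal_Q_triconnected_degree V E Q x :
  minimal_Q_triconnected V E Q -> x \in V -> x \notin Q -> 1 < degree E x.
Proof.
move=> [QT _ Vmin] xV xQ; rewrite ltnNge; apply/negP=> dx.
exact: Vmin x xV (Q_triconnected_del_vertex QT xQ dx).
Qed.

Lemma max_terminal_free_nbrs V E Q S y :
  max_terminal_free V E Q S -> y \in nbrs V E S -> y \notin S -> y \in Q.
Proof.
move=> [[_ SVQ Sconn] Smax].
rewrite inE => /andP[yV /existsP[s /andP[sS sy]]] yS.
apply: contraNT yS => yQ.
suff <- : y |: S = S by rewrite setU11.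
apply: Smax; first exact: subsetUr.
split; first by apply/set0Pn; exists y; rewrite setU11.
  by rewrite subUset sub1set !inE yQ yV.
exact: connected_graph_setU1 Sconn sS sy.
Qed.

Lemma degree_meeting_edges_in E S x :
  x \in S -> degree [set f in E | f :&: S != set0] x = degree E x.
Proof.
move=> xS; apply: eq_card => f; rewrite !inE.
case xf: (x \in f); rewrite ?andbF ?andbT //.
suff -> : f :&: S != set0 by rewrite andbT.
by apply/set0Pn; exists x; rewrite inE xf xS.
Qed.

Lemma degree_meeting_edges_nbr V E S x :
  simple_graph V E -> connected_graph S (induced_E E S) ->
  ~ has_cycle (S :|: nbrs V E S) [set f in E | f :&: S != set0] ->
  x \in nbrs V E S -> x \notin S ->
  degree [set f in E | f :&: S != set0] x = 1.
Proof.
set VT := S :|: nbrs V E S; set ET := [set f in E | _].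
move=> sg Sconn acyc xN xS.
have xVT : x \in VT by rewrite inE xN orbT.
have adjET c d : c \in S -> adj E c d -> adj ET c d.
  move=> cS cd; rewrite /adj inE -/(adj E c d) cd.
  by apply/set0Pn; exists c; rewrite !inE eqxx cS.
have lift a b p : gpath S (induced_E E S) a b p -> gpath VT ET a b p.
  apply: gpath_sub; first exact: subsetUl.
  move=> c d; rewrite /adj !inE => /andP[cdE cdS]; rewrite cdE.
  by apply/set0Pn; exists c; rewrite inE (subsetP cdS) ?setU11.
move: xN; rewrite inE => /andP[xV /existsP[s /andP[sS sx]]].
apply/eqP/cards1P; exists [set s; x]; apply/setP=> f; rewrite !inE.
apply/idP/eqP=> [/andP[/andP[fE /set0Pn[z]]] | ->]; last first.
  rewrite -/(adj E s x) sx set22 andbT.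
  by apply/set0Pn; exists s; rewrite !inE eqxx sS.
rewrite inE => /andP[zf zS] xf.
have [s' _ fs'] := simple_graph_edge sg fE xf.
have s'S : s' \in S.
  move: zf; rewrite fs' !inE => /orP[] /eqP ez; first by rewrite -ez.
  by rewrite -ez zS in xS.
rewrite fs'; case: (eqVneq s s') => [-> //|ss'].
have [p gp] := Sconn s s' sS s'S.
case: acyc; apply: cycle_of_gpath (lift _ _ _ gp) ss' xVT _ _ _.
- by case: gp => _ _ ap _; apply: contra xS => /(allP ap).
- by rewrite adjC adjET.
- by rewrite adjET // /adj -fs' fE.
Qed.

End Components.

Theorem lemma14 (T : finType) (V : {set T}) (E : {set {set T}}) (Q : {set T})
    (VT : {set T}) (ET : {set {set T}}) :
  simple_graph V E ->
  planar V E ->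
  minimal_Q_triconnected V E Q ->
  terminal_bounded V E Q VT ET ->
  is_tree VT ET ->
  forall x, x \in VT -> (x \in Q <-> is_leaf VT ET x).
Proof.
move=> sg _ minQ [[a [b [aQ bQ _ _ [-> ->]]]] | [S [Smax -> ->]]]
  [_ acyc] x xVT.
  have xQ : x \in Q by move: xVT; rewrite !inE => /orP[] /eqP->.
  split=> // _; split=> //; apply/eqP/cards1P; exists [set a; b].
  by apply/setP=> f; rewrite !inE andb_idr // => /eqP->.
have [[_ SVQ Sconn] _] := Smax.
split=> [xQ | [_ dx]].
  have xS : x \notin S.
    by apply: contraL xQ => /(subsetP SVQ); rewrite inE => /andP[].
  have xN : x \in nbrs V E S by move: xVT; rewrite inE (negbTE xS).
  by split=> //; exact: degree_meeting_edges_nbr sg Sconn acyc xN xS.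
apply/negPn/negP=> xQ.
have xS : x \in S.
  apply: contraNT xQ => xS; apply: max_terminal_free_nbrs Smax _ (xS).
  by move: xVT; rewrite inE (negbTE xS).
have xV : x \in V by move: (subsetP SVQ x xS); rewrite inE => /andP[].
have := minimal_Q_triconnected_degree minQ xV xQ.
by rewrite -(degree_meeting_edges_in E xS) dx.
Qed.
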